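(* Let $\Lambda=(W_j,\Lambda_j,v_j)_{j\in\mathbb{J}}$ be a g-fusion frame for $H$ with g-fusion frame operator $S_\Lambda$, let $\mathbb{I}\subseteq\mathbb{J}$, $\mathbb{I}^c=\mathbb{J}\setminus\mathbb{I}$, and for $\mathbb{K}\subseteq\mathbb{J}$ set $S_{\mathbb{K}}f:=\sum_{j\in\mathbb{K}}v_j^2\pi_{W_j}\Lambda_j^*\Lambda_j\pi_{W_j}f$. Then $$\frac12 S_\Lambda\le S_{\mathbb{I}}S_\Lambda^{-1}S_{\mathbb{I}}+S_{\mathbb{I}^c}S_\Lambda^{-1}S_{\mathbb{I}^c}\le\frac32 S_\Lambda$$ in the order of self-adjoint operators.
   Context: $H$ is a separable Hilbert space, $\mathbb{J}\subseteq\mathbb{Z}$, $\{H_j\}_{j\in\mathbb{J}}$ are separable Hilbert spaces, $\Lambda_j\in\mathcal{B}(H,H_j)$, $W_j$ are closed subspaces of $H$, $v_j>0$, and $\pi_V$ denotes the orthogonal projection onto a closed subspace $V$. The triple $\Lambda=(W_j,\Lambda_j,v_j)$ is a g-fusion frame for $H$ if there exist $0<A\le B<\infty$ with $A\Vert f\Vert^2\le\sum_{j\in\mathbb{J}}v_j^2\Vert\Lambda_j\pi_{W_j}f\Vert^2\le B\Vert f\Vert^2$ for all $f\in H$. Its g-fusion frame operator is $S_\Lambda f=\sum_{j\in\mathbb{J}}v_j^2\pi_{W_j}\Lambda_j^*\Lambda_j\pi_{W_j}f$ (bounded, positive, invertible). $T\le U$ means $\langle Tf,f\rangle\le\langle Uf,f\rangle$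 for all $f$. *)

From mathcomp Require Import all_boot all_order all_algebra.
From mathcomp Require Import reals complex.
Set Implicit Arguments. Unset Strict Implicit. Unset Printing Implicit Defensive.
Import Order.TTheory GRing.Theory Num.Theory.
Local Open Scope ring_scope.

Section Hilbert.
Variable R : realType.
Local Notation C := R[i].

Definition converges_to {V : zmodType} (nrm : V -> C) (u : nat -> V) (l : V) :=
  forall eps : C, 0 < eps -> exists N : nat, forall n, (N <= n)%N -> nrm (u n - l) < eps.

Definition cauchy_seq {V : zmodType} (nrm : V -> C) (u : nat -> V) :=
  forall eps : C, 0 < eps -> exists N : nat, forall n m, (N <= n)%N -> (N <= m)%N ->
     nrm (u n - u m) < eps.

Record hilbert (V : lmodType C) := Hilbert {
  ip : V -> V -> C;
  ip_linl : forall (a : C) (x y z : V), ip (a *: x + y) z = a * ip x z + ip y z;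
  ip_conj : forall x y : V, ip y x = (ip x y)^*;
  ip_ge0 : forall x : V, 0 <= ip x x;
  ip_eq0 : forall x : V, ip x x = 0 -> x = 0;
  ip_complete : forall u : nat -> V,
      cauchy_seq (fun x => sqrtC (ip x x)) u ->
      exists l, converges_to (fun x => sqrtC (ip x x)) u l
}.

Definition hnorm (V : lmodType C) (hV : hilbert V) (x : V) : C := sqrtC (ip hV x x).

Definition separable (V : lmodType C) (hV : hilbert V) :=
  exists d : nat -> V, forall (x : V) (eps : C), 0 < eps ->
    exists n, hnorm hV (x - d n) < eps.

Definition bounded_op (V W : lmodType C) (hV : hilbert V) (hW : hilbert W)
  (T : V -> W) :=
  (forall (a : C) (x y : V), T (a *: x + y) = a *: T x + T y) /\
  exists M : C, forall x, hnorm hW (T x) <= M * hnorm hV x.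

Definition is_adjoint (V W : lmodType C) (hV : hilbert V) (hW : hilbert W)
  (T : V -> W) (Ts : W -> V) :=
  forall (x : V) (y : W), ip hW (T x) y = ip hV x (Ts y).

Definition closed_subspace (V : lmodType C) (hV : hilbert V) (U : V -> Prop) :=
  U 0 /\ (forall (a : C) x y, U x -> U y -> U (a *: x + y)) /\
  (forall (u : nat -> V) l, (forall n, U (u n)) -> converges_to (hnorm hV) u l -> U l).

Definition is_orth_proj (V : lmodType C) (hV : hilbert V) (U : V -> Prop) (P : V -> V) :=
  forall f, U (P f) /\ forall w, U w -> ip hV (f - P f) w = 0.

(* Unconditional convergence of a family indexed by K ⊆ Z (net of finite subsets). *)
Definition has_sum {V : zmodType} (nrm : V -> C) (K : int -> Prop) (x : int -> V) (s : V) :=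
  forall eps : C, 0 < eps -> exists F0 : seq int, (forall j, j \in F0 -> K j) /\
    forall F : seq int, uniq F -> (forall j, j \in F -> K j) -> {subset F0 <= F} ->
      nrm (\sum_(j <- F) x j - s) < eps.

Definition op_le (V : lmodType C) (hV : hilbert V) (T U : V -> V) :=
  forall f, ip hV (T f) f <= ip hV (U f) f.

Definition gfusion_frame (H : lmodType C) (hH : hilbert H)
  (Hj : int -> lmodType C) (hHj : forall j, hilbert (Hj j)) (J : int -> Prop)
  (W : int -> H -> Prop) (P : int -> H -> H)
  (Lam : forall j, H -> Hj j) (v : int -> C) :=
  (forall j, J j -> closed_subspace hH (W j) /\ is_orth_proj hH (W j) (P j)) /\
  (forall j, J j -> bounded_op hH (hHj j) (Lam j)) /\
  (forall j, J j -> 0 < v j) /\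
  exists A B : C, 0 < A /\ A <= B /\
    forall f, exists s, has_sum (fun z : C => `|z|) J
       (fun j => v j ^+ 2 * hnorm (hHj j) (Lam j (P j f)) ^+ 2) s /\
       A * hnorm hH f ^+ 2 <= s /\ s <= B * hnorm hH f ^+ 2.

Definition is_partial_op (H : lmodType C) (hH : hilbert H)
  (Hj : int -> lmodType C) (K : int -> Prop) (P : int -> H -> H)
  (Lam : forall j, H -> Hj j) (Lams : forall j, Hj j -> H) (v : int -> C)
  (SK : H -> H) :=
  forall f, has_sum (hnorm hH) K
    (fun j => v j ^+ 2 *: P j (Lams j (Lam j (P j f)))) (SK f).

End Hilbert.

(* Write S = S_I + S_Ic, a sum of two positive self-adjoint operators, and put
   u = S^-1 S_I f, w = S^-1 S_Ic f, so that u + w = f and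
   <S_I S^-1 S_I f, f> = <S u, u>, <S_Ic S^-1 S_Ic f, f> = <S w, w>.
   Lower bound: the parallelogram inequality for the positive form of S gives
   <S f, f> = <S (u + w), u + w> <= 2 (<S u, u> + <S w, w>).
   Upper bound: positivity of S_I at f - u, together with S_I f = S u and
   S_I <= S, gives <S u, u> <= <S_I f, f>; likewise <S w, w> <= <S_Ic f, f>, so
   the middle operator is even bounded by S itself. *)
From mathcomp Require Import all_boot all_order all_algebra.
From mathcomp Require Import reals complex boolp.
From mathcomp Require Import ring.
Import Order.TTheory GRing.Theory Num.Theory.
Local Open Scope ring_scope.
Set Implicit Arguments. Unset Strict Implicit.

Section InnerProduct.
Variables (R : realType) (V : lmodType R[i]) (h : hilbert V).

Lemma ipDl x y z : ip h (x + y) z = ip h x z + ip h y z.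
Proof. by have := ip_linl h 1 x y z; rewrite scale1r mul1r. Qed.

Lemma ip0l z : ip h 0 z = 0.
Proof. by apply: (addIr (ip h 0 z)); rewrite add0r -ipDl addr0. Qed.

Lemma ipZl a x z : ip h (a *: x) z = a * ip h x z.
Proof. by have := ip_linl h a x 0 z; rewrite addr0 ip0l addr0. Qed.

Lemma ipBl x y z : ip h (x - y) z = ip h x z - ip h y z.
Proof. by rewrite ipDl -scaleN1r ipZl mulN1r. Qed.

Lemma ip_suml (F : seq int) (x : int -> V) z :
  ip h (\sum_(j <- F) x j) z = \sum_(j <- F) ip h (x j) z.
Proof. by elim: F => [|a F IH]; rewrite ?big_nil ?big_cons ?ip0l // ipDl IH. Qed.

Lemma ipDr x y z : ip h z (x + y) = ip h z x + ip h z y.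
Proof. by rewrite (ip_conj h x z) (ip_conj h y z) ip_conj ipDl rmorphD. Qed.

Lemma ipZr a x z : ip h z (a *: x) = a^* * ip h z x.
Proof. by rewrite (ip_conj h x z) ip_conj ipZl rmorphM. Qed.

Lemma ip0r z : ip h z 0 = 0.
Proof. by rewrite ip_conj ip0l rmorph0. Qed.

Lemma ipBr x y z : ip h z (x - y) = ip h z x - ip h z y.
Proof. by rewrite (ip_conj h _ z) (ip_conj h x z) (ip_conj h y z) ipBl rmorphB. Qed.

Lemma ip_extl x y : (forall z, ip h x z = ip h y z) -> x = y.
Proof. by move=> exy; apply/subr0_eq; apply: (@ip_eq0 _ _ h); rewrite ipBl exy subrr. Qed.

Lemma hnorm_ge0 x : 0 <= hnorm h x.
Proof. by rewrite sqrtC_ge0 ip_ge0. Qed.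

Lemma normr_ip_le x y : `|ip h x y| <= hnorm h x * hnorm h y.
Proof.
rewrite -(@ler_pXn2r _ 2) // ?nnegrE ?mulr_ge0 ?hnorm_ge0 //.
rewrite exprMn !sqrtCK.
have [yy0|yy_neq0] := eqVneq (ip h y y) 0.
  by rewrite (ip_eq0 yy0) !ip0r normr0 expr0n mulr0.
have yy_gt0 : 0 < ip h y y by rewrite lt_def yy_neq0 ip_ge0.
(* positivity of <y,y> x - <x,y> y, the vector orthogonal to y *)
have := ip_ge0 h (ip h y y *: x - ip h x y *: y).
rewrite !ipBl !ipZl !ipBr !ipZr (geC0_conj (ip_ge0 h y)) [ip h y x]ip_conj.
have -> : ip h y y * (ip h y y * ip h x x - (ip h x y)^* * ip h x y) -
    ip h x y * (ip h y y * (ip h x y)^* - (ip h x y)^* * ip h y y)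
  = ip h y y * (ip h x x * ip h y y - ip h x y * (ip h x y)^*) by ring.
by rewrite pmulr_rge0 // subr_ge0 normCK.
Qed.

End InnerProduct.

Section PositiveOperators.
Variables (R : realType) (V : lmodType R[i]) (h : hilbert V).

Definition selfadjoint (T : V -> V) := is_adjoint h h T T.

Definition nonneg_op (T : V -> V) := forall x, 0 <= ip h (T x) x.

Lemma selfadjointD T : selfadjoint T -> {morph T : x y / x + y}.
Proof. by move=> Tsa x y; apply: (@ip_extl _ _ h) => z; rewrite Tsa !ipDl !Tsa. Qed.

Lemma selfadjointB T : selfadjoint T -> {morph T : x y / x - y}.
Proof. by move=> Tsa x y; apply: (@ip_extl _ _ h) => z; rewrite Tsa !ipBl !Tsa. Qed.

Lemma nonneg_op_cross_le T : selfadjoint T -> nonneg_op T -> forall f u,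
  ip h (T f) u + ip h (T u) f <= ip h (T f) f + ip h (T u) u.
Proof.
move=> Tsa T_ge0 f u; rewrite -subr_ge0.
have -> : ip h (T f) f + ip h (T u) u - (ip h (T f) u + ip h (T u) f)
    = ip h (T (f - u)) (f - u).
  by rewrite selfadjointB // ipBl !ipBr; ring.
exact: T_ge0.
Qed.

Lemma nonneg_op_parallelogram T : selfadjoint T -> nonneg_op T -> forall u w,
  ip h (T (u + w)) (u + w) <= 2 * (ip h (T u) u + ip h (T w) w).
Proof.
move=> Tsa T_ge0 u w.
have -> : ip h (T (u + w)) (u + w)
    = ip h (T u) u + ip h (T w) w + (ip h (T u) w + ip h (T w) u).
  by rewrite selfadjointD // !ipDl !ipDr; ring.
by rewrite mulr_natl mulr2n lerD2l nonneg_op_cross_le.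
Qed.

End PositiveOperators.

Section Sandwich.
Variables (R : realType) (V : lmodType R[i]) (h : hilbert V) (S Sinv : V -> V).
Hypotheses (Ssa : selfadjoint h S) (S_ge0 : nonneg_op h S).
Hypotheses (SinvK : cancel Sinv S) (SK : cancel S Sinv).

Lemma ip_sandwich A f : selfadjoint h A ->
  ip h (A (Sinv (A f))) f = ip h (S (Sinv (A f))) (Sinv (A f)).
Proof. by move=> Asa; rewrite Asa -{2}(SinvK (A f)) Ssa. Qed.

Lemma sandwich_le A : selfadjoint h A -> nonneg_op h A -> op_le h A S ->
  op_le h (fun f => A (Sinv (A f))) A.
Proof.
move=> Asa A_ge0 AS f; rewrite /= ip_sandwich //.
set u := Sinv (A f).
have Af : A f = S u by rewrite SinvK.
have Afu : ip h (A f) u = ip h (S u) u by rewrite Af.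
have Auf : ip h (A u) f = ip h (S u) u by rewrite Asa Af Ssa.
have := nonneg_op_cross_le Asa A_ge0 f u; rewrite Afu Auf => cross.
by rewrite -(lerD2r (ip h (S u) u)); apply: le_trans cross _; rewrite lerD2l.
Qed.

Variables (A B : V -> V).
Hypotheses (Asa : selfadjoint h A) (Bsa : selfadjoint h B).
Hypotheses (A_ge0 : nonneg_op h A) (B_ge0 : nonneg_op h B).
Hypothesis SAB : forall x, S x = A x + B x.

Lemma sandwich_sum_le : op_le h (fun f => A (Sinv (A f)) + B (Sinv (B f))) S.
Proof.
move=> f; rewrite SAB !ipDl; apply: lerD; apply: sandwich_le => // x.
  by rewrite SAB ipDl lerDl.
by rewrite SAB ipDl lerDr.
Qed.

Lemma half_le_sandwich_sum :
  op_le h (fun f => 2^-1 *: S f) (fun f => A (Sinv (A f)) + B (Sinv (B f))).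
Proof.
move=> f; rewrite ipDl !ip_sandwich // ipZl ler_pdivrMl ?ltr0n //.
have uw : Sinv (A f) + Sinv (B f) = f.
  by apply: (can_inj SK); rewrite (selfadjointD Ssa) !SinvK SAB.
by rewrite -{1 2}uw nonneg_op_parallelogram.
Qed.

End Sandwich.

Section ComplexSums.
Variable R : realType.
Local Notation has_sumC K x s := (has_sum (fun z : R[i] => `|z|) K x s).

Lemma small_normr_eq0 (d : R[i]) : (forall e, 0 < e -> `|d| < e) -> d = 0.
Proof.
move=> small; have [//|d_neq0] := eqVneq d 0.
by move: (small `|d|); rewrite normr_gt0 d_neq0 ltxx => /(_ isT).
Qed.

Lemma uniq_merge (K : int -> Prop) (F0 F1 : seq int) :
  (forall j, j \in F0 -> K j) -> (forall j, j \in F1 -> K j) ->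
  exists F, [/\ uniq F, (forall j, j \in F -> K j),
                {subset F0 <= F} & {subset F1 <= F}].
Proof.
move=> F0K F1K; exists (undup (F0 ++ F1)); split.
- exact: undup_uniq.
- by move=> j; rewrite mem_undup mem_cat => /orP[/F0K|/F1K].
- by move=> j jF0; rewrite mem_undup mem_cat jF0.
- by move=> j jF1; rewrite mem_undup mem_cat jF1 orbT.
Qed.

Lemma has_sum_unique K (x : int -> R[i]) s t :
  has_sumC K x s -> has_sumC K x t -> s = t.
Proof.
move=> hs ht; apply/subr0_eq/small_normr_eq0 => e e_gt0.
have e2_gt0 : 0 < e / 2 by rewrite divr_gt0.
have [F0 [F0K hF0]] := hs _ e2_gt0; have [F1 [F1K hF1]] := ht _ e2_gt0.
have [F [uF FK F0F F1F]] := uniq_merge F0K F1K.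
have := hF0 F uF FK F0F; have := hF1 F uF FK F1F.
set σ := \sum_(j <- F) x j => ltt lts.
have -> : s - t = (σ - t) - (σ - s) by ring.
by apply: le_lt_trans (ler_normB _ _) _; rewrite [e]splitr ltrD.
Qed.

Lemma eq_has_sum K (x y : int -> R[i]) s :
  (forall j, K j -> x j = y j) -> has_sumC K x s -> has_sumC K y s.
Proof.
move=> exy hs e e_gt0; have [F0 [F0K hF0]] := hs e e_gt0.
exists F0; split => // F uF FK F0F.
by rewrite -(@eq_big_seq _ _ _ _ _ x) ?hF0 // => j /FK /exy.
Qed.

Lemma has_sum_conj K (x : int -> R[i]) s :
  has_sumC K x s -> has_sumC K (fun j => (x j)^*) s^*.
Proof.
move=> hs e e_gt0; have [F0 [F0K hF0]] := hs e e_gt0.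
exists F0; split => // F uF FK F0F.
by rewrite -rmorph_sum -rmorphB norm_conjC hF0.
Qed.

Lemma has_sum_ge0 K (x : int -> R[i]) s :
  (forall j, K j -> 0 <= x j) -> has_sumC K x s -> 0 <= s.
Proof.
move=> x_ge0 hs; suff /subr0_eq <- : `|s| - s = 0 by [].
apply: small_normr_eq0 => e e_gt0.
have e2_gt0 : 0 < e / 2 by rewrite divr_gt0.
have [F0 [F0K hF0]] := hs _ e2_gt0.
have [F [uF FK F0F _]] := uniq_merge F0K F0K.
have := hF0 F uF FK F0F; set σ := \sum_(j <- F) x j => lts.
have σ_ge0 : 0 <= σ by rewrite /σ big_seq sumr_ge0 // => j /FK /x_ge0.
have -> : `|s| - s = (`|s| - `|σ|) + (σ - s) by rewrite (ger0_norm σ_ge0); ring.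
apply: le_lt_trans (ler_normD _ _) _; rewrite [e]splitr ltrD //.
by apply: le_lt_trans (ler_dist_dist _ _) _; rewrite distrC.
Qed.

Lemma has_sum_split (I J : int -> Prop) (x : int -> R[i]) a b :
  (forall j, I j -> J j) ->
  has_sumC I x a -> has_sumC (fun j => J j /\ ~ I j) x b -> has_sumC J x (a + b).
Proof.
move=> IJ ha hb e e_gt0; have e2_gt0 : 0 < e / 2 by rewrite divr_gt0.
have [F0 [F0I hF0]] := ha _ e2_gt0; have [F1 [F1IJ hF1]] := hb _ e2_gt0.
have [G [_ GJ F0G F1G]] :=
  uniq_merge (fun j jF0 => IJ _ (F0I j jF0)) (fun j jF1 => (F1IJ j jF1).1).
exists G; split => // F uF FJ GF.
have ltI : `|\sum_(j <- F | `[< I j >]) x j - a| < e / 2.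
  rewrite -big_filter; apply: hF0; first exact: filter_uniq.
    by move=> j; rewrite mem_filter => /andP[/asboolP].
  by move=> j jF0; rewrite mem_filter; apply/andP; split; [apply/asboolP/F0I|apply/GF/F0G].
have ltIc : `|\sum_(j <- F | ~~ `[< I j >]) x j - b| < e / 2.
  rewrite -big_filter; apply: hF1; first exact: filter_uniq.
    by move=> j; rewrite mem_filter => /andP[/asboolP nIj /FJ Jj].
  move=> j jF1; rewrite mem_filter; apply/andP; split; last exact/GF/F1G.
  by apply/asboolP; case: (F1IJ j jF1).
rewrite (bigID (fun j => `[< I j >])) /= opprD addrACA.
by apply: le_lt_trans (ler_normD _ _) _; rewrite [e]splitr ltrD.
Qed.

End ComplexSums.

Section PartialSums.
Variables (R : realType) (V : lmodType R[i]) (h : hilbert V).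

Lemma has_sum_ipl K (y : int -> V) s z :
  has_sum (hnorm h) K y s ->
  has_sum (fun c : R[i] => `|c|) K (fun j => ip h (y j) z) (ip h s z).
Proof.
move=> hs e e_gt0.
have nz_gt0 : 0 < hnorm h z + 1 by rewrite ltr_wpDl ?hnorm_ge0.
have [F0 [F0K hF0]] := hs (e / (hnorm h z + 1)) (divr_gt0 e_gt0 nz_gt0).
exists F0; split => // F uF FK F0F; rewrite -ip_suml -ipBl.
apply: le_lt_trans (normr_ip_le h _ _) _.
apply: (@le_lt_trans _ _ (e / (hnorm h z + 1) * hnorm h z)).
  by rewrite ler_wpM2r ?hnorm_ge0 // ltW ?hF0.
by rewrite -mulrA gtr_pMr // mulrC ltr_pdivrMr // mul1r ltrDl.
Qed.

Variables (K : int -> Prop) (t : int -> V -> V) (SK : V -> V).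
Hypothesis SK_sum : forall f, has_sum (hnorm h) K (fun j => t j f) (SK f).

Lemma partial_sum_selfadjoint :
  (forall j, K j -> selfadjoint h (t j)) -> selfadjoint h SK.
Proof.
move=> tsa x y; rewrite (ip_conj h (SK y) x).
apply: has_sum_unique (has_sum_ipl y (SK_sum x)) _.
apply: eq_has_sum (has_sum_conj (has_sum_ipl x (SK_sum y))) => j Kj.
by rewrite -ip_conj tsa.
Qed.

Lemma partial_sum_nonneg : (forall j, K j -> nonneg_op h (t j)) -> nonneg_op h SK.
Proof. by move=> t_ge0 f; apply: has_sum_ge0 (has_sum_ipl f (SK_sum f)) => j /t_ge0. Qed.

End PartialSums.

Lemma partial_sum_split (R : realType) (V : lmodType R[i]) (h : hilbert V)
    (I J : int -> Prop) (t : int -> V -> V) (S SI SIc : V -> V) :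
  (forall j, I j -> J j) ->
  (forall f, has_sum (hnorm h) J (fun j => t j f) (S f)) ->
  (forall f, has_sum (hnorm h) I (fun j => t j f) (SI f)) ->
  (forall f, has_sum (hnorm h) (fun j => J j /\ ~ I j) (fun j => t j f) (SIc f)) ->
  forall f, S f = SI f + SIc f.
Proof.
move=> IJ hS hSI hSIc f; apply: (@ip_extl _ _ h) => z; rewrite ipDl.
apply: has_sum_unique (has_sum_ipl z (hS f)) _.
exact: has_sum_split IJ (has_sum_ipl z (hSI f)) (has_sum_ipl z (hSIc f)).
Qed.

Lemma orth_proj_selfadjoint (R : realType) (V : lmodType R[i]) (h : hilbert V)
    (U : V -> Prop) (Q : V -> V) :
  is_orth_proj h U Q -> selfadjoint h Q.
Proof.
move=> hQ x y.
have orth z w : ip h z (Q w) = ip h (Q z) (Q w).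
  by apply/eqP; rewrite -subr_eq0 -ipBl; apply/eqP/(hQ z).2/(hQ w).1.
by rewrite orth (ip_conj h y) orth -ip_conj.
Qed.

Section FrameTerm.
Variables (R : realType) (H K : lmodType R[i]) (hH : hilbert H) (hK : hilbert K).
Variables (U : H -> Prop) (Q : H -> H) (L : H -> K) (Ls : K -> H) (c : R[i]).
Hypotheses (hQ : is_orth_proj hH U Q) (hL : is_adjoint hH hK L Ls).

Lemma ip_frame_term f g :
  ip hH (c *: Q (Ls (L (Q f)))) g = c * ip hK (L (Q f)) (L (Q g)).
Proof. by rewrite ipZl (orth_proj_selfadjoint hQ) (ip_conj hH (Q g)) -hL -ip_conj. Qed.

Hypothesis c_ge0 : 0 <= c.

Lemma frame_term_selfadjoint : selfadjoint hH (fun f => c *: Q (Ls (L (Q f)))).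
Proof.
move=> f g; rewrite ip_frame_term (ip_conj hH) ip_frame_term rmorphM /=.
by rewrite geC0_conj // -ip_conj.
Qed.

Lemma frame_term_nonneg : nonneg_op hH (fun f => c *: Q (Ls (L (Q f)))).
Proof. by move=> f; rewrite ip_frame_term mulr_ge0 ?ip_ge0. Qed.

End FrameTerm.

Theorem corollary3p5 (R : realType) (H : lmodType R[i]) (hH : hilbert H)
  (Hj : int -> lmodType R[i]) (hHj : forall j, hilbert (Hj j))
  (J : int -> Prop) (W : int -> H -> Prop) (P : int -> H -> H)
  (Lam : forall j, H -> Hj j) (Lams : forall j, Hj j -> H) (v : int -> R[i])
  (I : int -> Prop) (S Sinv SI SIc : H -> H) :
  separable hH -> (forall j, separable (hHj j)) ->
  gfusion_frame hH hHj J W P Lam v ->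
  (forall j, J j -> is_adjoint hH (hHj j) (Lam j) (Lams j)) ->
  (forall j, I j -> J j) ->
  is_partial_op hH J P Lam Lams v S ->
  (forall f, S (Sinv f) = f /\ Sinv (S f) = f) ->
  is_partial_op hH I P Lam Lams v SI ->
  is_partial_op hH (fun j => J j /\ ~ I j) P Lam Lams v SIc ->
  op_le hH (fun f => 2^-1 *: S f) (fun f => SI (Sinv (SI f)) + SIc (Sinv (SIc f))) /\
  op_le hH (fun f => SI (Sinv (SI f)) + SIc (Sinv (SIc f))) (fun f => (3 / 2) *: S f).
Proof.
move=> _ _ [hW [_ [v_gt0 _]]] hadj IJ hS hinv hSI hSIc.
pose t j f := v j ^+ 2 *: P j (Lams j (Lam j (P j f))).
have v2_ge0 j : J j -> 0 <= v j ^+ 2 by move/v_gt0/ltW/exprn_ge0.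
have tsa j : J j -> selfadjoint hH (t j).
  by move=> Jj; exact: frame_term_selfadjoint (hW j Jj).2 (hadj j Jj) (v2_ge0 j Jj).
have t_ge0 j : J j -> nonneg_op hH (t j).
  by move=> Jj; exact: frame_term_nonneg (hW j Jj).2 (hadj j Jj) (v2_ge0 j Jj).
have SinvK : cancel Sinv S by move=> f; case: (hinv f).
have SK : cancel S Sinv by move=> f; case: (hinv f).
have Ssa := partial_sum_selfadjoint hS tsa.
have S_ge0 := partial_sum_nonneg hS t_ge0.
have SIsa := partial_sum_selfadjoint hSI (fun j Ij => tsa j (IJ j Ij)).
have SI_ge0 := partial_sum_nonneg hSI (fun j Ij => t_ge0 j (IJ j Ij)).
have SIcsa := partial_sum_selfadjoint hSIc (fun j IJj => tsa j IJj.1).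
have SIc_ge0 := partial_sum_nonneg hSIc (fun j IJj => t_ge0 j IJj.1).
have SAB := partial_sum_split IJ hS hSI hSIc.
split; first exact: (half_le_sandwich_sum Ssa S_ge0 SinvK SK SIsa SIcsa SAB).
move=> f; apply: le_trans (sandwich_sum_le Ssa SinvK SIsa SIcsa SI_ge0 SIc_ge0 SAB f) _.
by rewrite ipZl ler_peMl ?S_ge0 // ler_pdivlMr // mul1r ler_nat.
Qed.
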